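(* Let $T_s>0$, $t_k=kT_s$ ($k=0,1,2,\dots$), $a\ge 0$, $\eta>0$, and let $b[k]\ge 0$ be a sequence. Let $V:[0,\infty)\to[0,\infty)$ be continuous, differentiable on each interval $(t_k,t_{k+1})$, and satisfy the functional-differential inequality $$\dot V(t)\le -2\eta V(t)+\sqrt{V(t)}\left(a\sup_{t_k\le t'\le t}\sqrt{V(t')}+b[k]\right),\qquad t_k\le t<t_{k+1},\ k=0,1,\dots$$ Let $0<\eta'<\eta$ and suppose $q<1$, where $$q=\max\left\{e^{-\eta' T_s}+\frac{a(1-e^{-\eta' T_s})}{2\eta'},\ \frac{a}{2(\eta-\eta')}\right\},\qquad r=\max\left\{\frac{1-e^{-\eta' T_s}}{2\eta'},\ \frac{1}{2(\eta-\eta')}\right\}.$$ Set $W(t)=\sqrt{V(t)}$, $W[k]=W(t_k)$, $W_0=W[0]$. Then: 1. $W[k+1]\le qW[k]+r\,b[k]$ for all $k\ge 0$; 2. $W[k]\le q^kW_0+r\sum_{i=0}^{k-1}b[i]\,q^{k-i-1}$ for all $k\ge 0$; 3. if $q<\rho<1$ and $b[k]=\frac{\rho-q}{r}W[k]$ for all $k$, then $W[k]$ decays exponentially: $W[k]\le\rho^kW_0$ for all $k\ge 0$. *)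

From Stdlib Require Import Reals Lra.
Open Scope R_scope.

Fixpoint sumR (f : nat -> R) (n : nat) : R :=
  match n with
  | O => 0
  | S m => sumR f m + f m
  end.

Definition cont_on_nonneg (V : R -> R) : Prop :=
  forall t, 0 <= t -> limit1_in V (fun s => 0 <= s) (V t) t.

Definition q_const (Ts a eta eta' : R) : R :=
  Rmax (exp (- eta' * Ts) + a * (1 - exp (- eta' * Ts)) / (2 * eta'))
       (a / (2 * (eta - eta'))).

Definition r_const (Ts eta eta' : R) : R :=
  Rmax ((1 - exp (- eta' * Ts)) / (2 * eta')) (1 / (2 * (eta - eta'))).

From Stdlib Require Import Reals Lra Lia Classical.
Open Scope R_scope.

(* Write W = sqrt V and W[k] = W(k Ts).  On one sampling interval
   [[al, al + Ts]] the inequality is handled by comparison with squared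
   barriers: a first-crossing principle (a continuous function that starts
   negative and has negative slope at every first zero stays nonpositive)
   yields [V <= h^2] whenever [V] starts below [h^2] and grows slower than
   [h^2] at every touching point.  Two barriers are used:
   - a constant level [M >= max (W[k], bk / (2 eta - a))], which shows that
     [W] never exceeds [M] on the interval;
   - when [bk <= (2 eta - a) W[k]] (so the supremum term is just [W[k]]), the
     exponential profile solving [w' = -eta' w + (a W[k] + bk) / 2].
   Evaluating at [al + Ts] and comparing with the two entries of the maxima
   defining [q] and [r] gives [W[k+1] <= q W[k] + r b[k]] (part 1).  Part 2
   unrolls this linear recursive inequality, and part 3 observes that the
   feedback [b[k] = (rho - q)/r W[k]] turns it into the contraction
   [W[k+1] <= rho W[k]]. *)

Lemma limit1_in_near (f : R -> R) (D : R -> Prop) (c : R) :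
  limit1_in f D (f c) c ->
  forall eps, 0 < eps ->
  exists d, 0 < d /\ forall x, D x -> Rabs (x - c) < d -> Rabs (f x - f c) < eps.
Proof.
  intros Hc eps Heps; destruct (Hc eps Heps) as [d [Hd Hx]].
  exists d; split; [exact Hd|]; intros x HD Hxc; exact (Hx x (conj HD Hxc)).
Qed.

Lemma limit1_in_sub (f : R -> R) (D D' : R -> Prop) (l c : R) :
  (forall x, D' x -> D x) -> limit1_in f D l c -> limit1_in f D' l c.
Proof.
  intros HDD' Hc eps Heps; destruct (Hc eps Heps) as [d [Hd Hx]].
  exists d; split; [exact Hd|]; intros x [HD Hxc]; exact (Hx x (conj (HDD' x HD) Hxc)).
Qed.

Lemma continuity_pt_limit1_in (f : R -> R) (D : R -> Prop) (c : R) :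
  continuity_pt f c -> limit1_in f D (f c) c.
Proof.
  intros Hc eps Heps; destruct (Hc eps Heps) as [d [Hd Hx]].
  exists d; split; [exact Hd|]; intros x [HD Hxc].
  destruct (Req_dec x c) as [->|Hne].
  - simpl; unfold R_dist; rewrite Rminus_diag, Rabs_R0; exact Heps.
  - apply Hx; split; [split; [exact I | auto] | exact Hxc].
Qed.

Lemma negative_right_of_zero (f : R -> R) (c l : R) :
  derivable_pt_lim f c l -> l < 0 -> f c = 0 ->
  exists d, 0 < d /\ forall u, c < u < c + d -> f u < 0.
Proof.
  intros Hl Hneg Hz; destruct (Hl (- l) ltac:(lra)) as [[d Hd] Hdx]; simpl in Hdx.
  exists d; split; [exact Hd|]; intros u Hu.
  specialize (Hdx (u - c) ltac:(lra) ltac:(rewrite Rabs_right; lra)).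
  replace (c + (u - c)) with u in Hdx by ring; rewrite Hz, Rminus_0_r in Hdx.
  apply Rabs_def2 in Hdx; destruct Hdx as [Hquot _].
  replace (f u) with (f u / (u - c) * (u - c)) by (field; lra).
  assert (f u / (u - c) < 0) by lra; nra.
Qed.

(* The proof looks at
   the supremum [c] of the points up to which [f <= 0] holds. *)
Lemma first_crossing (f : R -> R) (al be : R) :
  al < be ->
  (forall t, al <= t <= be -> limit1_in f (fun s => al <= s <= be) (f t) t) ->
  f al < 0 ->
  (forall t, al < t < be -> f t = 0 -> (forall u, al <= u <= t -> f u <= 0) ->
     exists l, derivable_pt_lim f t l /\ l < 0) ->
  forall t, al <= t <= be -> f t <= 0.
Proof.
  intros Hab Hcont Hstart Hcross s Hs.
  apply Rnot_lt_le; intros Hfs.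
  set (E := fun x => al <= x <= s /\ forall u, al <= u <= x -> f u <= 0).
  assert (HEal : E al) by (split; [lra | intros u Hu; replace u with al by lra; lra]).
  destruct (completeness E) as [c [Hub Hlub]].
  { exists s; intros x [Hx _]; lra. }
  { exists al; exact HEal. }
  assert (Hac : al <= c) by (apply Hub, HEal).
  assert (Hcs : c <= s) by (apply Hlub; intros x [Hx _]; lra).
  (* [f <= 0] on [[al, c)], since each such point lies below some element of [E]. *)
  assert (Hbelow : forall u, al <= u < c -> f u <= 0).
  { intros u Hu; destruct (classic (is_upper_bound E u)) as [Hu'|Hu'].
    - apply Hlub in Hu'; lra.
    - apply not_all_ex_not in Hu'; destruct Hu' as [x Hx].
      apply imply_to_and in Hx; destruct Hx as [[_ Hx] Hxu]; apply Hx; lra. }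
  assert (Hfc : f c <= 0).
  { apply Rnot_lt_le; intros Hpos.
    destruct (Req_dec c al) as [->|Hne]; [lra|].
    destruct (limit1_in_near f _ c (Hcont c ltac:(lra)) (f c) Hpos) as [d [Hd Hnear]].
    set (x := Rmax al (c - d / 2)).
    assert (al <= x) by apply Rmax_l.
    assert (c - d / 2 <= x) by apply Rmax_r.
    assert (x < c) by (apply Rmax_lub_lt; lra).
    specialize (Hnear x ltac:(lra) ltac:(apply Rabs_def1; lra)).
    specialize (Hbelow x ltac:(lra)); apply Rabs_def2 in Hnear; lra. }
  assert (Hupto : forall u, al <= u <= c -> f u <= 0).
  { intros u Hu; destruct (Req_dec u c) as [->|]; [exact Hfc | apply Hbelow; lra]. }
  assert (Hcs' : c < s) by (destruct Hcs as [Hlt|Heq]; [exact Hlt | subst; lra]).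
  assert (Hbeyond : exists d, 0 < d /\ forall u, c < u < c + d -> u <= s -> f u <= 0).
  { destruct Hfc as [Hneg|Hzero].
    - destruct (limit1_in_near f _ c (Hcont c ltac:(lra)) (- f c) ltac:(lra))
        as [d [Hd Hnear]].
      exists d; split; [exact Hd|]; intros u Hu Hus.
      specialize (Hnear u ltac:(lra) ltac:(apply Rabs_def1; lra)).
      apply Rabs_def2 in Hnear; lra.
    - assert (Hcal : al < c) by (destruct Hac as [Hlt|Heq]; [exact Hlt | subst; lra]).
      destruct (Hcross c ltac:(lra) Hzero Hupto) as [l [Hl Hlneg]].
      destruct (negative_right_of_zero f c l Hl Hlneg Hzero) as [d [Hd Hright]].
      exists d; split; [exact Hd|]; intros u Hu _; left; apply Hright, Hu. }
  destruct Hbeyond as [d [Hd Hright]].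
  set (y := Rmin s (c + d / 2)).
  assert (y <= s) by apply Rmin_l.
  assert (y <= c + d / 2) by apply Rmin_r.
  assert (c < y) by (apply Rmin_glb_lt; lra).
  assert (HEy : E y).
  { split; [lra|]; intros u Hu.
    destruct (Rle_dec u c); [apply Hupto; lra | apply Hright; lra]. }
  apply Hub in HEy; lra.
Qed.

Lemma comparison_sq (V h h' : R -> R) (al be : R) :
  al < be ->
  (forall t, al <= t <= be -> limit1_in V (fun s => al <= s <= be) (V t) t) ->
  (forall t, derivable_pt_lim h t (h' t)) ->
  V al < h al * h al ->
  (forall t, al < t < be -> V t = h t * h t ->
     (forall u, al <= u <= t -> V u <= h u * h u) ->
     exists d, derivable_pt_lim V t d /\ d < 2 * h t * h' t) ->
  forall t, al <= t <= be -> V t <= h t * h t.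
Proof.
  intros Hab HV Hh Hstart Htouch t Ht.
  enough (Hgap : (fun x => V x - h x * h x) t <= 0) by (simpl in Hgap; lra).
  apply (first_crossing (fun x => V x - h x * h x) al be Hab); [| cbv beta; lra | | exact Ht].
  - intros u Hu; apply limit_minus; [apply HV, Hu|].
    apply limit_mul; apply continuity_pt_limit1_in, derivable_continuous_pt;
      exists (h' u); apply Hh.
  - intros u Hu Hz Hle; simpl in Hz.
    destruct (Htouch u Hu ltac:(lra) ltac:(intros w Hw; specialize (Hle w Hw); simpl in Hle; lra))
      as [d [Hd Hslow]].
    exists (d - (h' u * h u + h u * h' u)); split; [|lra].
    apply (derivable_pt_lim_minus V (h * h)%F); [exact Hd|].
    apply derivable_pt_lim_mult; apply Hh.
Qed.

Lemma derivable_pt_lim_exp_profile (C D c al t : R) :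
  derivable_pt_lim (fun x => C + D * exp (c * (x - al))) t (D * (c * exp (c * (t - al)))).
Proof.
  replace (D * (c * exp (c * (t - al)))) with (0 + D * (exp (c * (t - al)) * (c * (1 - 0))))
    by ring.
  apply (derivable_pt_lim_plus (fct_cte C) (mult_real_fct D (fun x => exp (c * (x - al)))));
    [apply derivable_pt_lim_const | apply derivable_pt_lim_scal].
  apply (derivable_pt_lim_comp (fun x => c * (x - al)) exp); [|apply derivable_pt_lim_exp].
  apply (derivable_pt_lim_scal (fun x => x - al)).
  apply (derivable_pt_lim_minus id (fct_cte al));
    [apply derivable_pt_lim_id | apply derivable_pt_lim_const].
Qed.

Lemma sqrt_le_of_le_sq (v m : R) : 0 <= m -> v <= m * m -> sqrt v <= m.
Proof. intros Hm Hv; rewrite <- (sqrt_square m Hm); apply sqrt_le_1_alt, Hv. Qed.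

Lemma q_const_nonneg (Ts a eta eta' : R) :
  0 <= a -> 0 < eta' < eta -> 0 <= q_const Ts a eta eta'.
Proof.
  intros ha heta'; eapply Rle_trans; [|apply Rmax_r].
  apply Rmult_le_pos; [exact ha | apply Rlt_le, Rinv_0_lt_compat; lra].
Qed.

Lemma r_const_pos (Ts eta eta' : R) : 0 < eta' < eta -> 0 < r_const Ts eta eta'.
Proof.
  intros heta'; eapply Rlt_le_trans; [|apply Rmax_r].
  apply Rmult_lt_0_compat; [lra | apply Rinv_0_lt_compat; lra].
Qed.

(* [q < 1] forces the small-gain condition [a < 2 eta']: the first entry of the
   max is a convex combination of [1] and [a / (2 eta')]. *)
Lemma small_gain_of_q_lt_1 (Ts a eta eta' : R) :
  0 < Ts -> 0 < eta' -> q_const Ts a eta eta' < 1 -> a < 2 * eta'.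
Proof.
  intros hTs heta' hq.
  assert (He : exp (- eta' * Ts) < 1) by (rewrite <- exp_0; apply exp_increasing; nra).
  assert (Hfirst := Rle_lt_trans _ _ _ (Rmax_l _ _) hq).
  assert (Hdiv : a * (1 - exp (- eta' * Ts)) / (2 * eta') < 1 - exp (- eta' * Ts)) by lra.
  apply Rmult_lt_compat_r with (r := 2 * eta') in Hdiv; [|lra].
  replace (a * (1 - exp (- eta' * Ts)) / (2 * eta') * (2 * eta'))
    with (a * (1 - exp (- eta' * Ts))) in Hdiv by (field; lra).
  nra.
Qed.

Section SamplingInterval.

Variables (al Ts a eta bk : R) (V : R -> R).
Hypothesis hTs : 0 < Ts.
Hypothesis ha : 0 <= a.
Hypothesis hbk : 0 <= bk.
Hypothesis hVal : 0 <= V al.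
Hypothesis hVc : forall t, al <= t <= al + Ts ->
  limit1_in V (fun s => al <= s <= al + Ts) (V t) t.
Hypothesis hVd : forall t, al < t < al + Ts ->
  exists d, derivable_pt_lim V t d /\
    exists S, is_lub (fun y => exists t', al <= t' <= t /\ y = sqrt (V t')) S /\
      d <= - 2 * eta * V t + sqrt (V t) * (a * S + bk).

Let Wk := sqrt (V al).

Lemma Wk_nonneg : 0 <= Wk.
Proof. apply sqrt_pos. Qed.

Lemma V_al_sq : V al = Wk * Wk.
Proof. unfold Wk; rewrite sqrt_sqrt; [reflexivity | exact hVal]. Qed.

Lemma sup_le_of_bound (t S m : R) :
  is_lub (fun y => exists t', al <= t' <= t /\ y = sqrt (V t')) S ->
  (forall t', al <= t' <= t -> sqrt (V t') <= m) -> S <= m.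
Proof. intros [_ Hlub] Hm; apply Hlub; intros y [t' [Ht' ->]]; apply Hm, Ht'. Qed.

(* Invariant level: any [M >= W[k]] with [bk <= (2 eta - a) M] bounds [sqrt V]
   on the interval, because at level [M] the right-hand side is negative. *)
Lemma interval_bound (M : R) :
  a < 2 * eta -> Wk <= M -> bk <= (2 * eta - a) * M ->
  forall t, al <= t <= al + Ts -> sqrt (V t) <= M.
Proof.
  intros Hgain HWM HbM t Ht; apply Rle_plus_epsilon; intros eps Heps.
  assert (HM : 0 <= M) by (pose proof Wk_nonneg; lra).
  apply sqrt_le_of_le_sq; [lra|].
  apply (comparison_sq V (fun _ => M + eps) (fun _ => 0) al (al + Ts)); [lra | exact hVc | | | | exact Ht].
  - intros u; apply derivable_pt_lim_const.
  - rewrite V_al_sq; pose proof Wk_nonneg; nra.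
  - intros u Hu Hz Hle; destruct (hVd u Hu) as [d [Hd [S [HS Hdb]]]].
    exists d; split; [exact Hd|].
    assert (HSM : S <= M + eps)
      by (apply (sup_le_of_bound u); [exact HS | intros t' Ht'; apply sqrt_le_of_le_sq; [lra | apply Hle, Ht']]).
    rewrite Hz, sqrt_square in Hdb by lra.
    assert (a * S <= a * (M + eps)) by (apply Rmult_le_compat_l; assumption).
    assert ((M + eps) * (a * S + bk) <= (M + eps) * (a * (M + eps) + bk))
      by (apply Rmult_le_compat_l; lra).
    assert (0 < (M + eps) * ((2 * eta - a) * eps))
      by (apply Rmult_lt_0_compat; [|apply Rmult_lt_0_compat]; lra).
    nra.
Qed.

Section Decay.

Variable eta' : R.
Hypothesis heta' : 0 < eta' < eta.

Let C := (a * Wk + bk) / (2 * eta').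

(* The exponential profile [C + (W[k] - C) e^{-eta' (t - al)}] is nonnegative
   for [t >= al], being a convex combination of [C >= 0] and [W[k] >= 0]. *)
Lemma decay_profile_nonneg (t : R) :
  al <= t -> 0 <= C + (Wk - C) * exp (- eta' * (t - al)).
Proof.
  intros Ht; pose proof Wk_nonneg as HW.
  assert (HC : 0 <= C) by (unfold C; apply Rmult_le_pos; [nra | apply Rlt_le, Rinv_0_lt_compat; lra]).
  assert (0 < exp (- eta' * (t - al))) by apply exp_pos.
  assert (exp (- eta' * (t - al)) <= 1)
    by (rewrite <- exp_0; destruct (Req_dec t al) as [->|];
          [right; f_equal; ring | left; apply exp_increasing; nra]).
  nra.
Qed.

(* Decay regime: when [bk <= (2 eta - a) W[k]], the supremum is [W[k]] and
   [sqrt V] is dominated by the solution of [w' = -eta' w + (a W[k] + bk)/2]. *)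
Lemma interval_decay :
  a < 2 * eta -> bk <= (2 * eta - a) * Wk ->
  forall t, al <= t <= al + Ts -> sqrt (V t) <= C + (Wk - C) * exp (- eta' * (t - al)).
Proof.
  intros Hgain Hbk t Ht; apply Rle_plus_epsilon; intros eps Heps.
  set (h := fun x => (C + eps) + (Wk - C) * exp (- eta' * (x - al))).
  assert (Hprof := decay_profile_nonneg t (proj1 Ht)).
  replace (C + (Wk - C) * exp (- eta' * (t - al)) + eps) with (h t) by (unfold h; ring).
  apply sqrt_le_of_le_sq; [unfold h; lra|].
  apply (comparison_sq V h (fun x => (Wk - C) * (- eta' * exp (- eta' * (x - al)))) al (al + Ts));
    [lra | exact hVc | intros u; apply derivable_pt_lim_exp_profile | | | exact Ht].
  - rewrite V_al_sq; unfold h; replace (- eta' * (al - al)) with 0 by ring; rewrite exp_0.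
    pose proof Wk_nonneg; nra.
  - intros u Hu Hz Hle; destruct (hVd u Hu) as [d [Hd [S [HS Hdb]]]].
    exists d; split; [exact Hd|].
    assert (Hhu : 0 < h u) by (unfold h; pose proof (decay_profile_nonneg u ltac:(lra)); lra).
    assert (HSW : S <= Wk)
      by (apply (sup_le_of_bound u); [exact HS | intros t' Ht'; apply interval_bound; lra]).
    rewrite Hz, sqrt_square in Hdb by lra.
    assert (a * S <= a * Wk) by (apply Rmult_le_compat_l; assumption).
    assert (h u * (a * S + bk) <= h u * (a * Wk + bk)) by (apply Rmult_le_compat_l; lra).
    assert (Hslope : (Wk - C) * (- eta' * exp (- eta' * (u - al)))
                     = - eta' * (h u - eps) + (a * Wk + bk) / 2)
      by (unfold h, C; field; lra).
    rewrite Hslope.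
    assert (eta * h u > eta' * (h u - eps)) by nra.
    nra.
Qed.

End Decay.

(* One sampling period: [W[k+1] <= q W[k] + r bk], obtained from the decay
   regime when [bk <= (2 eta - a) W[k]] and from the invariant level
   [bk / (2 eta - a)] otherwise. *)
Lemma sampling_step (eta' : R) :
  0 < eta' < eta -> q_const Ts a eta eta' < 1 ->
  sqrt (V (al + Ts)) <= q_const Ts a eta eta' * Wk + r_const Ts eta eta' * bk.
Proof.
  intros heta' hq.
  assert (Hgain := small_gain_of_q_lt_1 Ts a eta eta' hTs (proj1 heta') hq).
  assert (HW := Wk_nonneg).
  set (e := exp (- eta' * Ts)).
  assert (He : 0 < e) by apply exp_pos.
  destruct (Rle_dec bk ((2 * eta - a) * Wk)) as [Hdecay|Hlevel].
  - eapply Rle_trans; [apply (interval_decay eta' heta'); lra|].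
    replace (al + Ts - al) with Ts by ring; fold e.
    replace ((a * Wk + bk) / (2 * eta') + (Wk - (a * Wk + bk) / (2 * eta')) * e)
      with ((e + a * (1 - e) / (2 * eta')) * Wk + ((1 - e) / (2 * eta')) * bk)
      by (field; lra).
    apply Rplus_le_compat; apply Rmult_le_compat_r; [exact HW | apply Rmax_l | exact hbk | apply Rmax_l].
  - assert (Hlev : sqrt (V (al + Ts)) <= bk / (2 * eta - a)).
    { apply interval_bound; [lra | | | lra].
      - apply (Rmult_le_reg_l (2 * eta - a)); [lra|].
        replace ((2 * eta - a) * (bk / (2 * eta - a))) with bk by (field; lra); lra.
      - right; field; lra. }
    assert (Hr : bk / (2 * eta - a) <= r_const Ts eta eta' * bk).
    { assert (Hinv : / (2 * eta - a) <= r_const Ts eta eta').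
      { eapply Rle_trans; [|apply Rmax_r]; unfold Rdiv; rewrite Rmult_1_l.
        apply Rinv_le_contravar; lra. }
      unfold Rdiv; rewrite (Rmult_comm (r_const Ts eta eta')).
      apply Rmult_le_compat_l; assumption. }
    assert (0 <= q_const Ts a eta eta' * Wk)
      by (apply Rmult_le_pos; [apply q_const_nonneg; assumption | exact HW]).
    lra.
Qed.

End SamplingInterval.

Lemma sumR_ext (f g : nat -> R) (n : nat) :
  (forall i, (i < n)%nat -> f i = g i) -> sumR f n = sumR g n.
Proof.
  induction n as [|n IH]; intros Hfg; [reflexivity|]; simpl.
  rewrite IH by (intros i Hi; apply Hfg; lia).
  rewrite Hfg by lia; reflexivity.
Qed.

Lemma sumR_scal (c : R) (f : nat -> R) (n : nat) :
  c * sumR f n = sumR (fun i => c * f i) n.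
Proof. induction n as [|n IH]; simpl; [ring | rewrite <- IH; ring]. Qed.

Lemma linear_recursion_bound (x b : nat -> R) (q r : R) :
  0 <= q -> (forall k, x (S k) <= q * x k + r * b k) ->
  forall k, x k <= q ^ k * x O + r * sumR (fun i => b i * q ^ (k - i - 1)) k.
Proof.
  intros Hq Hstep k; induction k as [|k IH]; [simpl; lra|].
  assert (Hshift : sumR (fun i => b i * q ^ (S k - i - 1)) (S k)
                   = q * sumR (fun i => b i * q ^ (k - i - 1)) k + b k).
  { rewrite sumR_scal; cbn [sumR].
    replace (S k - k - 1)%nat with O by lia; rewrite pow_O, Rmult_1_r; f_equal.
    apply sumR_ext; intros i Hi.
    replace (S k - i - 1)%nat with (S (k - i - 1)) by lia; simpl; ring. }
  rewrite Hshift; simpl pow.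
  eapply Rle_trans; [apply Hstep|].
  apply Rmult_le_compat_l with (r := q) in IH; [|exact Hq].
  lra.
Qed.

Lemma geometric_decay (x : nat -> R) (rho : R) :
  0 <= rho -> (forall k, x (S k) <= rho * x k) -> forall k, x k <= rho ^ k * x O.
Proof.
  intros Hrho Hstep k; induction k as [|k IH]; [simpl; lra|].
  eapply Rle_trans; [apply Hstep|]; simpl.
  apply Rmult_le_compat_l with (r := rho) in IH; [lra | exact Hrho].
Qed.

Theorem lemma1 (Ts a eta eta' : R) (b : nat -> R) (V : R -> R)
  (hTs : 0 < Ts) (ha : 0 <= a) (heta : 0 < eta)
  (hb : forall k, 0 <= b k)
  (hVnn : forall t, 0 <= t -> 0 <= V t)
  (hVc : cont_on_nonneg V)
  (hVd : forall (k : nat) (t : R),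
      INR k * Ts < t < INR (S k) * Ts ->
      exists d, derivable_pt_lim V t d /\
        exists S, is_lub (fun y => exists t', INR k * Ts <= t' <= t /\ y = sqrt (V t')) S /\
          d <= - 2 * eta * V t + sqrt (V t) * (a * S + b k))
  (heta' : 0 < eta' < eta)
  (hq : q_const Ts a eta eta' < 1) :
  let q := q_const Ts a eta eta' in
  let r := r_const Ts eta eta' in
  let W := fun k : nat => sqrt (V (INR k * Ts)) in
  (forall k, W (S k) <= q * W k + r * b k) /\
  (forall k, W k <= q ^ k * W O + r * sumR (fun i => b i * q ^ (k - i - 1)) k) /\
  (forall rho, q < rho < 1 ->
     (forall k, b k = (rho - q) / r * W k) ->
     forall k, W k <= rho ^ k * W O).
Proof.
  intros q r W.
  assert (Hq0 : 0 <= q) by (apply q_const_nonneg; assumption).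
  assert (Hr : 0 < r) by (apply r_const_pos, heta').
  assert (Hstep : forall k, W (S k) <= q * W k + r * b k).
  { intro k; unfold W.
    assert (Hk : 0 <= INR k * Ts) by (apply Rmult_le_pos; [apply pos_INR | lra]).
    replace (INR (S k) * Ts) with (INR k * Ts + Ts) by (rewrite S_INR; ring).
    apply (sampling_step (INR k * Ts) Ts a eta (b k) V hTs ha (hb k) (hVnn _ Hk));
      [| | exact heta' | exact hq].
    - intros t Ht; apply (limit1_in_sub _ (fun s => 0 <= s)); [intros; lra | apply hVc; lra].
    - intros t Ht; apply hVd; rewrite S_INR; lra. }
  split; [exact Hstep|]; split.
  -
    apply linear_recursion_bound; assumption.
  -
    intros rho Hrho Hfeedback; apply geometric_decay; [lra|]; intro k.
    eapply Rle_trans; [apply Hstep|]; rewrite Hfeedback.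
    right; field; lra.
Qed.
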